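(* Let $M=\{m_1,m_2,m_3\}$ and $N=\{n_1,n_2,n_3\}$ be 3-element subsets of $\mathbb{N}$ (so the $m_i$ are pairwise distinct and the $n_i$ are pairwise distinct). For $X\subseteq\mathbb{N}$ let $S_X$ be the subsemigroup of $\mathbb{N}\times\mathbb{N}$ generated by $\{(1,x): x\in X\}$. Then there exists an isomorphism $\varphi:S_M\to S_N$ with $\varphi(1,m_i)=(1,n_i)$ for $i=1,2,3$ if and only if $$n_2(m_3-m_1)=n_1(m_3-m_2)+n_3(m_2-m_1).$$
   Context: $\mathbb{N}=\{1,2,3,\dots\}$ under addition, $\mathbb{N}\times\mathbb{N}$ with componentwise addition. *)

(* N = {1,2,3,...} is modelled inside nat; N x N as nat * nat
   with componentwise addition. *)
From Stdlib Require Import Arith ZArith.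

Definition padd (p q : nat * nat) : nat * nat := (fst p + fst q, snd p + snd q).

Inductive gen_sg (G : nat * nat -> Prop) : nat * nat -> Prop :=
| gen_base : forall p, G p -> gen_sg G p
| gen_add : forall p q, gen_sg G p -> gen_sg G q -> gen_sg G (padd p q).

Definition S3 (x1 x2 x3 : nat) : nat * nat -> Prop :=
  gen_sg (fun p => p = (1, x1) \/ p = (1, x2) \/ p = (1, x3)).

Definition sg_iso (A B : nat * nat -> Prop) (phi : nat * nat -> nat * nat) : Prop :=
  (forall p, A p -> B (phi p)) /\
  (forall p q, A p -> A q -> phi (padd p q) = padd (phi p) (phi q)) /\
  (forall p q, A p -> A q -> phi p = phi q -> p = q) /\
  (forall r, B r -> exists p, A p /\ phi p = r).

(* Every element of S_X is a combination (a1 + a2 + a3, a1 x1 + a2 x2 + a3 x3)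
   of the generators with a1 + a2 + a3 >= 1, and a map sending (1, m_i) to
   (1, n_i) must send the combination with coefficients a for M to the one with
   coefficients a for N.  It is therefore well defined and injective exactly when
   M and N have the same integer relations.  The relations of M are spanned by
   (m3 - m2, m1 - m3, m2 - m1), which is a relation of N iff the points (m_i, n_i)
   are collinear; conversely collinearity makes the identity (1, m_i) |-> (1, n_i)
   the restriction of a linear map of Q^2. *)
From Stdlib Require Import Arith ZArith Lia.

Definition lc (x1 x2 x3 a1 a2 a3 : nat) : nat * nat :=
  (a1 + a2 + a3, a1 * x1 + a2 * x2 + a3 * x3).

Lemma padd_0_r (p : nat * nat) : padd p (0, 0) = p.
Proof. destruct p as [k y]; unfold padd; simpl; f_equal; lia. Qed.

Lemma lc_add x1 x2 x3 a1 a2 a3 b1 b2 b3 :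
  padd (lc x1 x2 x3 a1 a2 a3) (lc x1 x2 x3 b1 b2 b3)
  = lc x1 x2 x3 (a1 + b1) (a2 + b2) (a3 + b3).
Proof. unfold padd, lc; simpl; f_equal; ring. Qed.

Lemma lc_succ1 x1 x2 x3 a1 a2 a3 :
  lc x1 x2 x3 (S a1) a2 a3 = padd (1, x1) (lc x1 x2 x3 a1 a2 a3).
Proof. unfold padd, lc; simpl; f_equal; lia. Qed.

Lemma lc_succ2 x1 x2 x3 a1 a2 a3 :
  lc x1 x2 x3 a1 (S a2) a3 = padd (1, x2) (lc x1 x2 x3 a1 a2 a3).
Proof. unfold padd, lc; simpl; f_equal; lia. Qed.

Lemma lc_succ3 x1 x2 x3 a1 a2 a3 :
  lc x1 x2 x3 a1 a2 (S a3) = padd (1, x3) (lc x1 x2 x3 a1 a2 a3).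
Proof. unfold padd, lc; simpl; f_equal; lia. Qed.

Lemma lc_pair_ind (P : nat * nat -> nat * nat -> Prop) x1 x2 x3 y1 y2 y3 :
  P (0, 0) (0, 0) ->
  (forall p q, P p q -> P (padd (1, x1) p) (padd (1, y1) q)) ->
  (forall p q, P p q -> P (padd (1, x2) p) (padd (1, y2) q)) ->
  (forall p q, P p q -> P (padd (1, x3) p) (padd (1, y3) q)) ->
  forall a1 a2 a3, P (lc x1 x2 x3 a1 a2 a3) (lc y1 y2 y3 a1 a2 a3).
Proof.
  intros H0 H1 H2 H3 a1 a2 a3.
  induction a1 as [|a1 IH]; [induction a2 as [|a2 IH]; [induction a3 as [|a3 IH]|]|];
    rewrite ?lc_succ1, ?lc_succ2, ?lc_succ3; auto.
Qed.

Lemma hom_lc phi m1 m2 m3 n1 n2 n3 :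
  (forall p q, S3 m1 m2 m3 p -> S3 m1 m2 m3 q -> phi (padd p q) = padd (phi p) (phi q)) ->
  phi (1, m1) = (1, n1) -> phi (1, m2) = (1, n2) -> phi (1, m3) = (1, n3) ->
  forall a1 a2 a3, 1 <= a1 + a2 + a3 ->
  S3 m1 m2 m3 (lc m1 m2 m3 a1 a2 a3) /\ phi (lc m1 m2 m3 a1 a2 a3) = lc n1 n2 n3 a1 a2 a3.
Proof.
  intros Hadd E1 E2 E3 a1 a2 a3 Ha.
  (* the empty combination (0, 0) lies outside S3 *)
  set (P p q := (p = (0, 0) /\ q = (0, 0)) \/ (S3 m1 m2 m3 p /\ phi p = q)).
  assert (step : forall g h, S3 m1 m2 m3 g -> phi g = h ->
                 forall p q, P p q -> P (padd g p) (padd h q)).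
  { intros g h Hg Eg p q [[-> ->] | [Hp <-]]; right.
    - rewrite !padd_0_r; auto.
    - split; [now apply gen_add | rewrite Hadd; congruence]. }
  assert (HP : P (lc m1 m2 m3 a1 a2 a3) (lc n1 n2 n3 a1 a2 a3)).
  { apply lc_pair_ind; [now left | ..]; apply step; auto; apply gen_base; auto. }
  destruct HP as [[H0 _] | H]; [injection H0; lia | exact H].
Qed.

Lemma S3_lcP x1 x2 x3 p :
  S3 x1 x2 x3 p <->
  exists a1 a2 a3, 1 <= a1 + a2 + a3 /\ p = lc x1 x2 x3 a1 a2 a3.
Proof.
  split.
  - induction 1 as [p Hp | p q _ [a1 [a2 [a3 [Ha ->]]]] _ [b1 [b2 [b3 [Hb ->]]]]].
    + destruct Hp as [-> | [-> | ->]]; [exists 1, 0, 0 | exists 0, 1, 0 | exists 0, 0, 1];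
        unfold lc; split; f_equal; lia.
    + exists (a1 + b1), (a2 + b2), (a3 + b3); rewrite lc_add; split; [lia | reflexivity].
  - intros [a1 [a2 [a3 [Ha ->]]]].
    apply (hom_lc (fun p => p) x1 x2 x3 x1 x2 x3); auto.
Qed.

Definition is_relation (x1 x2 x3 : nat) (e1 e2 e3 : Z) : Prop :=
  (e1 + e2 + e3 = 0 /\ e1 * Z.of_nat x1 + e2 * Z.of_nat x2 + e3 * Z.of_nat x3 = 0)%Z.

Lemma lc_eq_relation x1 x2 x3 a1 a2 a3 b1 b2 b3 :
  lc x1 x2 x3 a1 a2 a3 = lc x1 x2 x3 b1 b2 b3 <->
  is_relation x1 x2 x3 (Z.of_nat a1 - Z.of_nat b1) (Z.of_nat a2 - Z.of_nat b2)
    (Z.of_nat a3 - Z.of_nat b3).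
Proof.
  unfold lc, is_relation; split.
  - intros E; injection E; lia.
  - intros [E1 E2]; f_equal; lia.
Qed.

Definition collinear (m1 m2 m3 n1 n2 n3 : nat) : Prop :=
  (Z.of_nat n1 * (Z.of_nat m3 - Z.of_nat m2) + Z.of_nat n2 * (Z.of_nat m1 - Z.of_nat m3)
   + Z.of_nat n3 * (Z.of_nat m2 - Z.of_nat m1) = 0)%Z.

Lemma relation_transfer m1 m2 m3 n1 n2 n3 e1 e2 e3 :
  collinear m1 m2 m3 n1 n2 n3 -> n1 <> n3 ->
  is_relation n1 n2 n3 e1 e2 e3 -> is_relation m1 m2 m3 e1 e2 e3.
Proof.
  unfold collinear, is_relation.
  set (M1 := Z.of_nat m1); set (M2 := Z.of_nat m2); set (M3 := Z.of_nat m3).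
  set (N1 := Z.of_nat n1); set (N2 := Z.of_nat n2); set (N3 := Z.of_nat n3).
  intros Hcol Hn13 [He0 HeN]; split; [exact He0|].
  assert (Key : ((N3 - N1) * (e1 * M1 + e2 * M2 + e3 * M3)
                 = (M3 - M1) * (e1 * N1 + e2 * N2 + e3 * N3)
                   + e2 * (N1 * (M3 - M2) + N2 * (M1 - M3) + N3 * (M2 - M1)))%Z).
  { replace e1 with (- e2 - e3)%Z by lia; ring. }
  rewrite HeN, Hcol, !Z.mul_0_r, Z.add_0_r in Key.
  apply Z.mul_eq_0 in Key as [H | H]; [unfold N1, N3 in H; lia | exact H].
Qed.

Lemma of_nat_sub_sub x y : (Z.of_nat (x - y) - Z.of_nat (y - x) = Z.of_nat x - Z.of_nat y)%Z.
Proof. lia. Qed.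

Lemma hom_collinear phi m1 m2 m3 n1 n2 n3 :
  (forall p q, S3 m1 m2 m3 p -> S3 m1 m2 m3 q -> phi (padd p q) = padd (phi p) (phi q)) ->
  phi (1, m1) = (1, n1) -> phi (1, m2) = (1, n2) -> phi (1, m3) = (1, n3) ->
  collinear m1 m2 m3 n1 n2 n3.
Proof.
  intros Hadd E1 E2 E3.
  pose proof (hom_lc phi _ _ _ _ _ _ Hadd E1 E2 E3) as Hlc.
  assert (Hrel : lc m1 m2 m3 (m3 - m2) (m1 - m3) (m2 - m1)
                 = lc m1 m2 m3 (m2 - m3) (m3 - m1) (m1 - m2)).
  { apply lc_eq_relation; unfold is_relation; rewrite !of_nat_sub_sub; split; ring. }
  assert (Hn : lc n1 n2 n3 (m3 - m2) (m1 - m3) (m2 - m1)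
               = lc n1 n2 n3 (m2 - m3) (m3 - m1) (m1 - m2)).
  { destruct (Nat.eq_0_gt_0_cases ((m3 - m2) + (m1 - m3) + (m2 - m1))) as [H0 | Hpos].
    - replace m1 with m2 by lia; replace m3 with m2 by lia; reflexivity.
    - rewrite <- (proj2 (Hlc _ _ _ Hpos)), Hrel; apply Hlc.
      injection Hrel; lia. }
  apply lc_eq_relation in Hn; destruct Hn as [_ Hn].
  rewrite !of_nat_sub_sub in Hn; unfold collinear; lia.
Qed.

Lemma lc_eq_transfer m1 m2 m3 n1 n2 n3 a1 a2 a3 b1 b2 b3 :
  collinear m1 m2 m3 n1 n2 n3 -> n1 <> n3 ->
  lc n1 n2 n3 a1 a2 a3 = lc n1 n2 n3 b1 b2 b3 ->
  lc m1 m2 m3 a1 a2 a3 = lc m1 m2 m3 b1 b2 b3.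
Proof.
  intros Hcol Hn13 E; apply lc_eq_relation in E; apply lc_eq_relation.
  exact (relation_transfer _ _ _ _ _ _ _ _ _ Hcol Hn13 E).
Qed.

(* The linear map (k, y) |-> (k, (k (n1 m3 - n3 m1) + y (n3 - n1)) / (m3 - m1))
   of Q^2, which sends (1, m1) to (1, n1) and (1, m3) to (1, n3); it sends
   (1, m2) to (1, n2) exactly when the points (m_i, n_i) are collinear. *)
Definition collinear_map (m1 m3 n1 n3 : nat) (p : nat * nat) : nat * nat :=
  let '(k, y) := p in
  (k, Z.to_nat ((Z.of_nat k * (Z.of_nat n1 * Z.of_nat m3 - Z.of_nat n3 * Z.of_nat m1)
                 + Z.of_nat y * (Z.of_nat n3 - Z.of_nat n1))
                / (Z.of_nat m3 - Z.of_nat m1))).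

Lemma collinear_map_lc m1 m2 m3 n1 n2 n3 a1 a2 a3 :
  m1 <> m3 -> collinear m1 m2 m3 n1 n2 n3 ->
  collinear_map m1 m3 n1 n3 (lc m1 m2 m3 a1 a2 a3) = lc n1 n2 n3 a1 a2 a3.
Proof.
  unfold collinear_map, lc, collinear; intros Hm13 Hcol; f_equal.
  rewrite <- (Nat2Z.id (a1 * n1 + a2 * n2 + a3 * n3)); f_equal.
  symmetry; apply Z.div_unique_exact; [lia|].
  rewrite !Nat2Z.inj_add, !Nat2Z.inj_mul.
  set (M1 := Z.of_nat m1) in *; set (M2 := Z.of_nat m2) in *; set (M3 := Z.of_nat m3) in *.
  set (N1 := Z.of_nat n1) in *; set (N2 := Z.of_nat n2) in *; set (N3 := Z.of_nat n3) in *.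
  transitivity ((M3 - M1) * (Z.of_nat a1 * N1 + Z.of_nat a2 * N2 + Z.of_nat a3 * N3)
                + Z.of_nat a2 * (N1 * (M3 - M2) + N2 * (M1 - M3) + N3 * (M2 - M1)))%Z;
    [ring | rewrite Hcol; ring].
Qed.

Lemma lc_map_iso phi m1 m2 m3 n1 n2 n3 :
  (forall a1 a2 a3, phi (lc m1 m2 m3 a1 a2 a3) = lc n1 n2 n3 a1 a2 a3) ->
  (forall a1 a2 a3 b1 b2 b3, lc n1 n2 n3 a1 a2 a3 = lc n1 n2 n3 b1 b2 b3 ->
                             lc m1 m2 m3 a1 a2 a3 = lc m1 m2 m3 b1 b2 b3) ->
  sg_iso (S3 m1 m2 m3) (S3 n1 n2 n3) phi.
Proof.
  intros Hphi Hinj; repeat split.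
  - intros p [a1 [a2 [a3 [Ha ->]]]]%S3_lcP.
    rewrite Hphi; apply S3_lcP; eauto.
  - intros p q [a1 [a2 [a3 [_ ->]]]]%S3_lcP [b1 [b2 [b3 [_ ->]]]]%S3_lcP.
    rewrite lc_add, !Hphi; symmetry; apply lc_add.
  - intros p q [a1 [a2 [a3 [_ ->]]]]%S3_lcP [b1 [b2 [b3 [_ ->]]]]%S3_lcP.
    rewrite !Hphi; apply Hinj.
  - intros r [a1 [a2 [a3 [Ha ->]]]]%S3_lcP.
    exists (lc m1 m2 m3 a1 a2 a3); split; [apply S3_lcP; eauto | apply Hphi].
Qed.

Lemma lc_map_gens phi m1 m2 m3 n1 n2 n3 :
  (forall a1 a2 a3, phi (lc m1 m2 m3 a1 a2 a3) = lc n1 n2 n3 a1 a2 a3) ->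
  phi (1, m1) = (1, n1) /\ phi (1, m2) = (1, n2) /\ phi (1, m3) = (1, n3).
Proof.
  intros Hphi.
  generalize (Hphi 1 0 0) (Hphi 0 1 0) (Hphi 0 0 1); unfold lc; simpl.
  rewrite !Nat.add_0_r; auto.
Qed.

Theorem lemma2p3 (m1 m2 m3 n1 n2 n3 : nat) :
  1 <= m1 -> 1 <= m2 -> 1 <= m3 -> 1 <= n1 -> 1 <= n2 -> 1 <= n3 ->
  m1 <> m2 -> m1 <> m3 -> m2 <> m3 ->
  n1 <> n2 -> n1 <> n3 -> n2 <> n3 ->
  ((exists phi : nat * nat -> nat * nat,
      sg_iso (S3 m1 m2 m3) (S3 n1 n2 n3) phi /\
      phi (1, m1) = (1, n1) /\ phi (1, m2) = (1, n2) /\ phi (1, m3) = (1, n3))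
   <->
   (Z.of_nat n2 * (Z.of_nat m3 - Z.of_nat m1)
    = Z.of_nat n1 * (Z.of_nat m3 - Z.of_nat m2)
      + Z.of_nat n3 * (Z.of_nat m2 - Z.of_nat m1))%Z).
Proof.
  intros _ _ _ _ _ _ _ Hm13 _ _ Hn13 _.
  transitivity (collinear m1 m2 m3 n1 n2 n3); [split | unfold collinear; lia].
  - intros [phi [[_ [Hadd _]] [E1 [E2 E3]]]].
    exact (hom_collinear phi _ _ _ _ _ _ Hadd E1 E2 E3).
  - intros Hcol.
    pose proof (fun a1 a2 a3 => collinear_map_lc m1 m2 m3 n1 n2 n3 a1 a2 a3 Hm13 Hcol) as Hlc.
    exists (collinear_map m1 m3 n1 n3); split.
    + apply lc_map_iso; [exact Hlc |].
      intros a1 a2 a3 b1 b2 b3; exact (lc_eq_transfer _ _ _ _ _ _ _ _ _ _ _ _ Hcol Hn13).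
    + exact (lc_map_gens _ _ _ _ _ _ _ Hlc).
Qed.
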